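(* Consider the full binary tree network with levels $0,1,\dots,9$ (root at level $0$, $512$ leaves at level $9$, $N=2^{10}-1$ nodes), in which every node at level $s<9$ owes $\$2^{10-s}$ to each of its two children, leaves owe nothing, and $\mathbf e=\mathbf 0$. For a cash injection $\mathbf c\ge \mathbf 0$, let $N_d(\mathbf c)$ be the number of nodes $i$ with $p_i<\bar p_i$, where $\mathbf p$ is the clearing payment vector. Then: if $C\ge 2048$, the minimum of $N_d(\mathbf c)$ over $\mathbf c\ge\mathbf 0$ with $\mathbf 1^T\mathbf c=C$ is $0$; and if $C$ is an integer with $0\le C<2048$ with binary expansion $C=\sum_{u\ge 0} b(u)2^u$, $b(u)\in\{0,1\}$, this minimum equals \[ 511-\sum_{u= 3}^{10} b(u)\,(2^{u-2}-1). \]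
   Context: Financial network model: $L_{ij}\ge 0$ is the amount node $i$ owes node $j$; $\bar p_i=\sum_j L_{ij}$; $\Pi_{ij}=L_{ij}/\bar p_i$ if $\bar p_i\ne0$, else $0$. Given cash on hand $\mathbf e$ and injection $\mathbf c$, the clearing payment vector is the (here unique) $\mathbf p$ with $\mathbf p=\min(\bar{\mathbf p},\Pi^T\mathbf p+\mathbf e+\mathbf c)$ componentwise: each node pays its liabilities in full if its funds (received payments plus $e_i+c_i$) suffice, otherwise pays all its funds, split among creditors in proportion to amounts owed. A node $i$ is in default if $p_i<\bar p_i$. *)

From HB Require Import structures.
From mathcomp Require Import all_boot all_order all_algebra.
Set Implicit Arguments. Unset Strict Implicit. Unset Printing Implicit Defensive.
Import Order.TTheory GRing.Theory Num.Theory.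
Local Open Scope ring_scope.

Section Network.
Variables (R : realFieldType) (n : nat).
(* L i j = amount node i owes node j *)
Variable L : 'I_n -> 'I_n -> R.

Definition pbar (i : 'I_n) : R := \sum_(j < n) L i j.

Definition relLiab (i j : 'I_n) : R :=
  if pbar i != 0 then L i j / pbar i else 0.

Definition clearing (e c p : 'I_n -> R) : Prop :=
  forall i : 'I_n,
    p i = Num.min (pbar i) (\sum_(j < n) relLiab j i * p j + e i + c i).

Definition Ndef (p : 'I_n -> R) : nat := #|[set i : 'I_n | p i < pbar i]|.

Definition feasible (C : R) (c : 'I_n -> R) : Prop :=
  (forall i, 0 <= c i) /\ \sum_(i < n) c i = C.

Definition min_defaults (e : 'I_n -> R) (C : R) (m : nat) : Prop :=
  (exists c p, feasible C c /\ clearing e c p /\ Ndef p = m) /\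
  (forall c p, feasible C c -> clearing e c p -> (m <= Ndef p)%N).
End Network.

(* Nodes are 'I_1023 in heap order: node k has children 2k+1 and 2k+2;
   level of node k is floor(log2(k+1)); internal nodes (levels < 9) are k < 511. *)
Definition tlevel (k : nat) : nat := trunc_log 2 k.+1.

Definition treeL (R : realFieldType) (i j : 'I_1023) : R :=
  if ((i < 511)%N && ((j == (2 * i).+1 :> nat) || (j == (2 * i).+2 :> nat)))
  then (2 ^ (10 - tlevel i))%:R else 0.

Definition bit (C u : nat) : nat := (C %/ 2 ^ u) %% 2.

From HB Require Import structures.
From mathcomp Require Import all_boot all_order all_algebra.
From mathcomp Require Import zify ring lra.
Import Order.TTheory GRing.Theory Num.Theory.

Set Implicit Arguments.
Unset Strict Implicit.
Unset Printing Implicit Defensive.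

(* Nodes are numbered in heap order (children of k are 2k+1 and 2k+2), every
   internal node k owes 2^(11 - level k) in total, half to each child, and a
   child receives exactly half of what its parent pays.

   Call an internal node solvent if it pays in full.  A solvent
   node of height d+1 forces at least 8 * 2^d dollars into its subtree, so if
   [cover k d] counts these 8-dollar units (a solvent node covers its whole
   subtree, otherwise add up the children) then 8 * cover <= total injection.
   On the other hand a subtree with [cover] units contains at most
   [cap cover] solvent nodes, where cap M = sum_u bit M u * (2^(u+1) - 1) is
   superadditive and monotone.  Hence at most cap (C / 8) nodes are solvent.

   Injecting C mod 8 at the root and, for each binary digit of
   C / 8, exactly the obligation of the corresponding right child on the
   leftmost spine makes these subtrees completely solvent, which realizes
   cap (C / 8) solvent nodes.  For C >= 2048 injecting everything at the root
   makes every node solvent. *)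

Lemma tlevel_child1 k : tlevel (2 * k).+1 = (tlevel k).+1.
Proof. rewrite /tlevel -trunc_log2_double //; congr trunc_log; lia. Qed.

Lemma tlevel_child2 k : tlevel (2 * k).+2 = (tlevel k).+1.
Proof.
rewrite /tlevel trunc_log2S; last by lia.
have -> : (2 * k).+3 = true + (k.+1).*2 by rewrite -mul2n; lia.
by rewrite half_bit_double.
Qed.

Lemma tlevel_ltP k n : (k < 2 ^ n - 1) = (tlevel k < n).
Proof.
have lo := trunc_logP (isT : 1 < 2) (ltn0Sn k).
have hi := trunc_log_ltn k.+1 (isT : 1 < 2).
rewrite -/(tlevel k) in lo hi.
apply/idP/idP => H.
- rewrite ltnNge; apply/negP => hn.
  have : 2 ^ n <= 2 ^ tlevel k by rewrite leq_exp2l.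
  lia.
- have : 2 ^ (tlevel k).+1 <= 2 ^ n by rewrite leq_exp2l.
  lia.
Qed.

Lemma internal_level k : (k < 511) = (tlevel k < 9).
Proof. exact: (tlevel_ltP k 9). Qed.

Lemma tlevel_pow s : 0 < s -> tlevel (2 ^ s) = s.
Proof.
move=> s_gt0; rewrite /tlevel; apply: trunc_log_eq => //.
have := expn_gt0 2 s; have : 2 <= 2 ^ s by rewrite -{1}(expn1 2) leq_exp2l.
rewrite expnS; lia.
Qed.

Section SubtreeBig.
Variables (V : Type) (idx : V) (op : Monoid.com_law idx).

Fixpoint subtree_big (F : nat -> V) (k d : nat) : V :=
  if d is d'.+1 then
    op (op (F k) (subtree_big F (2 * k).+1 d')) (subtree_big F (2 * k).+2 d')
  else idx.

Lemma subtree_bigS F k d : subtree_big F k d.+1 =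
  op (op (F k) (subtree_big F (2 * k).+1 d)) (subtree_big F (2 * k).+2 d).
Proof. by []. Qed.

Lemma subtree_big_levels F d k : subtree_big F k d =
  \big[op/idx]_(l < d) \big[op/idx]_(j < 2 ^ l) F (k.+1 * 2 ^ l - 1 + j).
Proof.
elim: d k => [|d IH] k; first by rewrite big_ord0.
rewrite big_ord_recl /= big_ord1 !IH -Monoid.mulmA.
have -> : k.+1 * 1 - 1 + 0 = k by lia.
congr (op _ _).
have twice l : 2 ^ (bump 0 l) = 2 ^ l + 2 ^ l by rewrite /bump /= expnS; lia.
under [RHS]eq_bigr => l _ do rewrite twice big_split_ord.
rewrite big_split /=; congr (op _ _); apply: eq_bigr => l _;
  apply: eq_bigr => j _; congr F; have := expn_gt0 2 l; lia.
Qed.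

Lemma levels_prefix F m :
  \big[op/idx]_(l < m) \big[op/idx]_(j < 2 ^ l) F (2 ^ l - 1 + j) =
  \big[op/idx]_(i < 2 ^ m - 1) F i.
Proof.
elim: m => [|m IH]; first by rewrite big_ord0 expn0 subnn big_ord0.
rewrite big_ord_recr /= IH.
have -> : 2 ^ m.+1 - 1 = (2 ^ m - 1) + 2 ^ m
  by have := expn_gt0 2 m; rewrite expnS; lia.
by rewrite big_split_ord; congr (op _ _); apply: eq_bigr => j _.
Qed.

Lemma subtree_big_root F : subtree_big F 0 9 = \big[op/idx]_(i < 511) F i.
Proof.
rewrite subtree_big_levels -(levels_prefix F 9).
by apply: eq_bigr => l _; apply: eq_bigr => j _; rewrite mul1n.
Qed.
End SubtreeBig.

(* The capacity cap M = 2M - (number of binary digits 1 of M), for M < 512: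
   the largest number of solvent nodes that M units of 8 dollars can buy. *)
Definition cap (M : nat) : nat := \sum_(0 <= u < 9) bit M u * (2 ^ u.+1 - 1).

(* The arithmetic facts about cap below concern finitely many values and are
   verified by evaluation; [range_check] turns such a check into a lemma. *)
Lemma range_check (P : pred nat) n : all P (iota 0 n) -> forall m, m < n -> P m.
Proof. by move=> /allP H m hm; apply: H; rewrite mem_iota. Qed.

Lemma cap_superadditive a b : a <= 128 -> b <= 128 -> cap a + cap b <= cap (a + b).
Proof.
have chk : all (fun a => all (fun b => cap a + cap b <= cap (a + b)) (iota 0 129))
               (iota 0 129) by rewrite /cap unlock; vm_compute.
by move=> ha hb; apply: (range_check (range_check chk _) _); lia.
Qed.

Lemma cap_monotone m n : m <= n -> n <= 256 -> cap m <= cap n.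
Proof.
have step : all (fun M => cap M <= cap M.+1) (iota 0 256)
  by rewrite /cap unlock; vm_compute.
move=> mn; elim: n mn => [|n IH]; first by rewrite leqn0 => /eqP->.
rewrite leq_eqVlt => /orP[/eqP-> //|]; rewrite ltnS => mn hn.
by apply: leq_trans (IH mn (ltnW hn)) (range_check step _); lia.
Qed.

Lemma cap_pow d : d <= 8 -> cap (2 ^ d) = 2 ^ d.+1 - 1.
Proof.
have chk : all (fun d => cap (2 ^ d) == 2 ^ d.+1 - 1) (iota 0 9)
  by rewrite /cap unlock; vm_compute.
by move=> hd; apply/eqP/(range_check chk); lia.
Qed.

Lemma binary_expansion8 M : M < 256 ->
  \sum_(s < 8) bit M (7 - s) * 2 ^ (10 - s) = 8 * M.
Proof.
have chk : all (fun M => \sum_(0 <= s < 8) bit M (7 - s) * 2 ^ (10 - s) == 8 * M)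
             (iota 0 256) by rewrite unlock; vm_compute.
move=> hM; rewrite -(big_mkord xpredT (fun s => bit M (7 - s) * 2 ^ (10 - s))).
exact/eqP/(range_check chk).
Qed.

Lemma cap_reversed M : M < 256 ->
  \sum_(0 <= t < 8) bit M (7 - t) * (2 ^ (8 - t) - 1) = cap M.
Proof.
have chk : all (fun M => \sum_(0 <= t < 8) bit M (7 - t) * (2 ^ (8 - t) - 1) == cap M)
             (iota 0 256) by rewrite /cap unlock; vm_compute.
by move=> hM; apply/eqP/(range_check chk).
Qed.

(* The formula of the theorem is cap (C / 8): digit u + 3 of C is digit u of
   C / 8, and C / 8 has no digit 8. *)
Lemma bit_div8 C u : bit C (u + 3) = bit (C %/ 8) u.
Proof. by rewrite /bit expnD mulnC divnMA. Qed.

Lemma cap_div8 C : C < 2048 ->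
  \sum_(3 <= u < 11) bit C u * (2 ^ (u - 2) - 1) = cap (C %/ 8).
Proof.
move=> hC; rewrite (big_addn 0 11 3) /cap [RHS]big_nat_recr //=.
have -> : bit (C %/ 8) 8 = 0 by rewrite /bit divn_small //; lia.
rewrite mul0n addn0; apply: eq_big_nat => u _.
by rewrite bit_div8; congr (_ * (2 ^ _ - 1)); lia.
Qed.

Section Counting.
Variable solv : nat -> bool.

Definition solvent_count := subtree_big addn (fun i => nat_of_bool (solv i)).

Fixpoint cover (k d : nat) : nat :=
  if d is d'.+1 then
    (if solv k then 2 ^ d' else cover (2 * k).+1 d' + cover (2 * k).+2 d')
  else 0.

Lemma coverS k d : cover k d.+1 =
  if solv k then 2 ^ d else cover (2 * k).+1 d + cover (2 * k).+2 d.
Proof. by []. Qed.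

Lemma solvent_countS k d : solvent_count k d.+1 =
  solv k + solvent_count (2 * k).+1 d + solvent_count (2 * k).+2 d.
Proof. by []. Qed.

Lemma solvent_count_max d k : solvent_count k d <= 2 ^ d - 1.
Proof.
elim: d k => [|d IH] k //; rewrite solvent_countS.
have := IH (2 * k).+1; have := IH (2 * k).+2; have := expn_gt0 2 d.
rewrite expnS; case: (solv k) => /=; lia.
Qed.

Lemma cover_max d k : cover k d.+1 <= 2 ^ d.
Proof.
elim: d k => [|d IH] k /=; first by case: (solv k).
case: (solv k) => //; have := IH (2 * k).+1; have := IH (2 * k).+2.
rewrite /= expnS; lia.
Qed.

Lemma solvent_count_cap d k : d <= 9 -> solvent_count k d <= cap (cover k d).
Proof.
have small d' k' : d' <= 8 -> cover k' d' <= 128.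
  case: d' => [//|d'] hd; apply: leq_trans (cover_max d' k') _.
  by rewrite -[128]/(2 ^ 7) leq_exp2l //; lia.
elim: d k => [|d IH] k hd //.
rewrite coverS; case hs: (solv k).
  by rewrite cap_pow; [exact: solvent_count_max | lia].
apply: leq_trans (cap_superadditive (small _ _ _) (small _ _ _)); try lia.
rewrite solvent_countS hs /= add0n.
by apply: leq_add; apply: IH; lia.
Qed.
End Counting.

Section TreeNetwork.
Variable R : realFieldType.
Local Open Scope ring_scope.

Definition vext (f : 'I_1023 -> R) (k : nat) : R :=
  if (k < 1023)%N then f (inord k) else 0.

Definition oblig (k : nat) : R := if (k < 511)%N then (2 ^ (11 - tlevel k))%N%:R else 0.

Definition inflow (q : nat -> R) (k : nat) : R := if k is 0 then 0 else q (k.-1 %/ 2)%N / 2.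

Lemma vext_ord f (i : 'I_1023) : vext f i = f i.
Proof. by rewrite /vext ltn_ord inord_val. Qed.

Lemma vext_ge0 (f : 'I_1023 -> R) : (forall i, 0 <= f i) -> forall k, 0 <= vext f k.
Proof. by move=> hf k; rewrite /vext; case: ifP. Qed.

Lemma oblig_ge0 k : 0 <= oblig k.
Proof. by rewrite /oblig; case: ifP. Qed.

Lemma inflow_ge0 (q : nat -> R) : (forall k, 0 <= q k) -> forall k, 0 <= inflow q k.
Proof. by move=> hq [|k] //=; apply: divr_ge0. Qed.

Lemma sum_indicator n (G : nat -> R) x : (x < n)%N ->
  \sum_(j < n) (if (j : nat) == x then G j else 0) = G x.
Proof.
move=> hx; rewrite (bigD1 (Ordinal hx)) //= eqxx big1 ?addr0 // => j hj.
have : (j : nat) != x by apply: contraNneq hj => e; apply/eqP/val_inj.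
by move/negbTE->.
Qed.

Lemma oblig_twice k : (k < 511)%N -> oblig k = (2 ^ (10 - tlevel k))%N%:R *+ 2.
Proof.
move=> hk; have := hk; rewrite internal_level => hl.
rewrite /oblig hk mulr2n -natrD; congr (_%:R).
have -> : (11 - tlevel k = (10 - tlevel k).+1)%N by lia.
by rewrite expnS mul2n addnn.
Qed.

Lemma pbar_tree (i : 'I_1023) : pbar (@treeL R) i = oblig i.
Proof.
rewrite /pbar /treeL; case hi: (i < 511)%N => /=; last by rewrite /oblig hi big1.
set a : R := (2 ^ (10 - tlevel i))%N%:R.
rewrite (eq_bigr (fun j : 'I_1023 => (if (j : nat) == (2 * i).+1 then a else 0) +
                                     (if (j : nat) == (2 * i).+2 then a else 0))).
  by rewrite big_split /= !(sum_indicator (fun _ => a)) ?oblig_twice ?mulr2n //; lia.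
by move=> j _; case: eqP => [->|_]; case: eqP => //=; rewrite ?addr0 ?add0r //; lia.
Qed.

Lemma oblig_child q k : (k < 511)%N -> (k = (2 * q).+1 \/ k = (2 * q).+2) ->
  oblig q / 2 = oblig k.
Proof.
move=> hk hkq; have hq : (q < 511)%N by lia.
have hl : tlevel k = (tlevel q).+1
  by case: hkq => ->; rewrite ?tlevel_child1 ?tlevel_child2.
rewrite oblig_twice // /oblig hk hl.
have -> : (11 - (tlevel q).+1 = 10 - tlevel q)%N by lia.
by rewrite -mulr_natr; field.
Qed.

Lemma relLiab_tree (i j : 'I_1023) : relLiab (@treeL R) j i =
  if (0 < i)%N && ((j : nat) == (i.-1 %/ 2)%N) then 1 / 2 else 0.
Proof.
have := ltn_ord i; rewrite /relLiab pbar_tree /treeL /oblig.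
case hj: (j < 511)%N => /=; last first.
  by rewrite eqxx; case: ifP => // /andP[_ /eqP]; lia.
move=> _.
rewrite pnatr_eq0 expn_eq0 /=.
case: ifP => hc.
  have -> : ((0 < i)%N && ((j : nat) == (i.-1 %/ 2)%N)) = true.
    by move: hc => /orP[] /eqP ->; apply/andP; split => //; apply/eqP; lia.
  have := hj; rewrite internal_level => hl.
  have -> : (11 - tlevel j = (10 - tlevel j).+1)%N by lia.
  by rewrite expnS natrM; field; rewrite pnatr_eq0 expn_eq0.
rewrite mul0r; case: ifP => // /andP[i_gt0 /eqP j_parent].
by move/negbT: hc; rewrite negb_or => /andP[/eqP ? /eqP ?]; lia.
Qed.

Lemma inflow_tree (p : 'I_1023 -> R) (i : 'I_1023) :
  \sum_(j < 1023) relLiab (@treeL R) j i * p j = inflow (vext p) i.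
Proof.
under eq_bigr => j _ do rewrite relLiab_tree -(vext_ord p j).
case: i => [[|k] hk] /=; first by rewrite big1 // => j _; rewrite /= mul0r.
rewrite (eq_bigr (fun j : 'I_1023 => if (j : nat) == (k %/ 2)%N then vext p j / 2 else 0)).
  by rewrite (sum_indicator (fun j => vext p j / 2)) //; lia.
by move=> j _; case: ifP; rewrite ?mul0r // mul1r mulrC.
Qed.

Definition tree_clearing (c p : 'I_1023 -> R) := forall k, (k < 1023)%N ->
  vext p k = Num.min (oblig k) (inflow (vext p) k + vext c k).

Lemma clearing_tree (c p : 'I_1023 -> R) :
  clearing (@treeL R) (fun _ => 0) c p <-> tree_clearing c p.
Proof.
split=> H.
  move=> k hk; have := H (Ordinal hk); rewrite pbar_tree inflow_tree addr0 /=.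
  have e f : vext f k = f (Ordinal hk)
    by rewrite /vext hk; congr f; apply/val_inj; rewrite /= inordK.
  by rewrite !e.
move=> i; have := H i (ltn_ord i); rewrite !vext_ord => ->.
by rewrite pbar_tree inflow_tree addr0.
Qed.

(* Existence of a clearing vector: computing payments top-down, the payment
   of node k is fixed after k + 1 rounds. *)
Fixpoint clear_iter (cn : nat -> R) (f k : nat) : R :=
  if f is f'.+1 then Num.min (oblig k) (inflow (clear_iter cn f') k + cn k) else 0.

Lemma clear_iter_stable cn f1 f2 k : (k < f1)%N -> (k < f2)%N ->
  clear_iter cn f1 k = clear_iter cn f2 k.
Proof.
elim: f1 f2 k => [|f1 IH] [|f2] k //= h1 h2; congr (Num.min _ (_ + _)).
by case: k h1 h2 => [|k] h1 h2 //=; congr (_ / _); apply: IH; lia.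
Qed.

Lemma exists_clearing (c : 'I_1023 -> R) : exists p, tree_clearing c p.
Proof.
pose p (i : 'I_1023) := clear_iter (vext c) 1024 i.
have ep k : (k < 1023)%N -> vext p k = clear_iter (vext c) 1024 k
  by move=> hk; rewrite /vext hk /p inordK.
exists p => k hk; rewrite ep //=; congr (Num.min _ (_ + _)).
case: k hk => [|k] hk //=; rewrite ep; last by lia.
by rewrite (@clear_iter_stable _ 1024 1023) //; lia.
Qed.

Definition solvent (p : 'I_1023 -> R) (k : nat) : bool :=
  (k < 511)%N && ~~ (vext p k < oblig k).

Lemma oblig_height k d : (tlevel k + d.+1 = 9)%N -> oblig k = (8 * 2 ^ d)%N%:R.
Proof.
move=> hl; rewrite /oblig internal_level (_ : tlevel k < 9)%N; last by lia.
congr (_%:R); have -> : (11 - tlevel k = d.+3)%N by lia.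
by rewrite !expnS; lia.
Qed.

Lemma inflow_full (p : 'I_1023 -> R) k q : (k < 511)%N ->
  (k = (2 * q).+1 \/ k = (2 * q).+2) -> vext p q = oblig q -> inflow (vext p) k = oblig k.
Proof.
move=> hk hkq e; rewrite -(oblig_child hk hkq) -e.
by case: hkq => -> /=; congr (vext p _ / 2); lia.
Qed.

Section Clearing.
Variables (c p : 'I_1023 -> R).
Hypotheses (c_ge0 : forall i, 0 <= c i) (p_clear : tree_clearing c p).

Lemma clearing_ge0 k : 0 <= vext p k.
Proof.
elim/ltn_ind: k => k IH.
case hk: (k < 1023)%N; last by rewrite /vext hk.
rewrite p_clear // le_min oblig_ge0 /=; apply: addr_ge0; last exact: vext_ge0.
by case: k IH hk => [|k] IH hk //=; apply: divr_ge0 => //; apply: IH; lia.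
Qed.

Lemma defaults_solvent : Ndef (@treeL R) p = (511 - solvent_count (solvent p) 0 9)%N.
Proof.
rewrite /Ndef -sum1_card big_mkcond /=.
under eq_bigr => i _ do rewrite inE pbar_tree -(vext_ord p i).
rewrite -(big_mkord xpredT (fun k => if vext p k < oblig k then 1%N else 0%N)).
rewrite (@big_cat_nat _ _ _ 511) //= [X in (_ + X)%N]big_nat_cond.
rewrite [X in (_ + X)%N]big1 ?addn0; last first.
  by move=> k /andP[/andP[h1 _] _]; rewrite /oblig ltnNge h1 /= ltNge clearing_ge0.
rewrite big_mkord /solvent_count subtree_big_root.
have split511 : (\sum_(i < 511) (if (vext p i < oblig i)%R then 1 else 0) +
                 \sum_(i < 511) solvent p i)%N = 511%N.
  rewrite -big_split /= (eq_bigr (fun _ => 1%N)) ?sum_nat_const ?card_ord //.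
  by move=> i _; rewrite /solvent ltn_ord /=; case: (_ < _).
by rewrite -[X in (X - _)%N]split511 addnK.
Qed.

Lemma subtree_injection_ge0 d k : 0 <= subtree_big +%R (vext c) k d.
Proof.
by elim: d k => [|d IH] k //; rewrite subtree_bigS !addr_ge0 ?vext_ge0.
Qed.

(* Lower bound: the solvent nodes of a subtree of height d must be financed
   by its inflow and the injections into it. *)
Lemma cover_financed d k : (tlevel k + d = 9)%N ->
  (8 * cover (solvent p) k d)%N%:R <= inflow (vext p) k + subtree_big +%R (vext c) k d.
Proof.
elim: d k => [|d IH] k hl.
  by rewrite muln0 /= addr0; exact: inflow_ge0 clearing_ge0 k.
have hk : (k < 511)%N by rewrite internal_level; lia.
have hpk := p_clear (k := k) ltac:(lia).
have rest1 := subtree_injection_ge0 d (2 * k).+1.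
have rest2 := subtree_injection_ge0 d (2 * k).+2.
rewrite coverS subtree_bigS /solvent hk /=.
case hs: (vext p k < oblig k) => /=; last first.
  have paid_full : oblig k <= vext p k by rewrite leNgt hs.
  have : vext p k <= inflow (vext p) k + vext c k by rewrite hpk ge_min lexx orbT.
  by move: paid_full; rewrite (oblig_height hl); lra.
have pays_all : vext p k = inflow (vext p) k + vext c k.
  move: hs; rewrite hpk; case: (leP (oblig k) (inflow (vext p) k + vext c k)) => // _.
  by rewrite ltxx.
have child_inflow k' : (k' = (2 * k).+1 \/ k' = (2 * k).+2) ->
    inflow (vext p) k' = vext p k / 2.
  by move=> hk'; rewrite /inflow; case: hk' => ->; congr (_ / _); congr vext; lia.
have left := IH (2 * k).+1 ltac:(rewrite tlevel_child1; lia).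
have right := IH (2 * k).+2 ltac:(rewrite tlevel_child2; lia).
rewrite !child_inflow in left right; try tauto.
rewrite mulnDr natrD; lra.
Qed.

Lemma full_subtree d k : (tlevel k + d.+1 = 9)%N -> vext p k = oblig k ->
  solvent_count (solvent p) k d.+1 = (2 ^ d.+1 - 1)%N.
Proof.
elim: d k => [|d IH] k hl e; have hk : (k < 511)%N by rewrite internal_level; lia.
  by rewrite solvent_countS /= /solvent hk e ltxx.
have child k' : (k' = (2 * k).+1 \/ k' = (2 * k).+2) ->
    tlevel k' = (tlevel k).+1 -> solvent_count (solvent p) k' d.+1 = (2 ^ d.+1 - 1)%N.
  move=> hk' hl'; have hk5 : (k' < 511)%N by rewrite internal_level; lia.
  apply: IH; first by lia.
  by rewrite p_clear ?(inflow_full hk5 hk' e) ?min_l ?lerDl ?vext_ge0 //; lia.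
rewrite solvent_countS /solvent hk e ltxx (child (2 * k).+1) ?tlevel_child1
  ?(child (2 * k).+2) ?tlevel_child2; try tauto.
by rewrite !expnS; have := expn_gt0 2 d; lia.
Qed.
End Clearing.

Lemma defaults_lower_bound (C : nat) (c p : 'I_1023 -> R) : (C < 2048)%N ->
  feasible C%:R c -> tree_clearing c p -> (511 - cap (C %/ 8) <= Ndef (@treeL R) p)%N.
Proof.
move=> hC [hc hsum] hp; rewrite (defaults_solvent hc hp).
have financed := cover_financed hc hp (d := 9) (k := 0) erefl.
rewrite add0r subtree_big_root in financed.
have injected : \sum_(i < 511) vext c i <= C%:R.
  rewrite -hsum (big_ord_widen 1023 (vext c)) // big_mkcond /=.
  by apply: ler_sum => i _; rewrite vext_ord; case: ifP.
have units : (8 * cover (solvent p) 0 9 <= C)%N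
  by rewrite -(ler_nat R); apply: le_trans financed injected.
have := solvent_count_cap (solvent p) 0 (leqnn 9).
have := cap_monotone (m := cover (solvent p) 0 9) (n := C %/ 8) ltac:(lia) ltac:(lia).
lia.
Qed.
End TreeNetwork.

(* The optimal injection for C < 2048: C mod 8 at the root, and for every
   binary digit s of C / 8 (counted from the top) the obligation
   2^(10 - s) of node 2^(s+1), the right child of the spine node 2^s - 1. *)
Section OptimalInjection.
Variables (R : realFieldType) (C : nat).
Hypothesis hC : (C < 2048)%N.
Local Open Scope ring_scope.

Definition spine_injection (i : 'I_1023) : R :=
  (if (i : nat) == 0%N then (C %% 8)%N%:R else 0) +
  \sum_(s < 8) (if (i : nat) == (2 ^ s.+1)%N
                then (bit (C %/ 8) (7 - s) * 2 ^ (10 - s))%N%:R else 0).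

Lemma spine_node_internal s : (s < 8)%N -> (2 ^ s.+1 < 511)%N.
Proof.
move=> hs; have : (2 ^ s.+1 <= 2 ^ 8)%N by rewrite leq_exp2l.
by rewrite (_ : 2 ^ 8 = 256)%N //; lia.
Qed.

Lemma spine_injection_feasible : feasible C%:R spine_injection.
Proof.
split=> [i|].
  by apply: addr_ge0; [case: ifP | apply: sumr_ge0 => s _; case: ifP].
rewrite big_split /= (sum_indicator (fun _ => (C %% 8)%N%:R)) // exchange_big /=.
rewrite (eq_bigr (fun s : 'I_8 => (bit (C %/ 8) (7 - s) * 2 ^ (10 - s))%N%:R)); last first.
  move=> s _; rewrite (sum_indicator (fun _ => (bit (C %/ 8) (7 - s) * 2 ^ (10 - s))%N%:R)) //.
  by have := spine_node_internal (ltn_ord s); lia.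
rewrite -natr_sum binary_expansion8; last by lia.
by rewrite -natrD; congr (_%:R); have := divn_eq C 8; lia.
Qed.

Variable p : 'I_1023 -> R.
Hypothesis hp : tree_clearing spine_injection p.

Lemma spine_node_pays s : (s < 8)%N -> bit (C %/ 8) (7 - s) = 1%N ->
  vext p (2 ^ s.+1) = oblig R (2 ^ s.+1).
Proof.
move=> hs hb; have internal := spine_node_internal hs.
have [cge _] := spine_injection_feasible.
rewrite hp; last by lia.
apply: min_l; rewrite -[X in X <= _]add0r; apply: lerD.
  exact: inflow_ge0 (clearing_ge0 cge hp) _.
rewrite /vext (_ : 2 ^ s.+1 < 1023)%N; last by lia.
rewrite /spine_injection inordK; last by lia.
rewrite (_ : (2 ^ s.+1 == 0)%N = false) ?add0r; last by rewrite expn_eq0.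
rewrite (bigD1 (Ordinal hs)) //= eqxx hb mul1n /oblig internal tlevel_pow //.
by rewrite lerDl; apply: sumr_ge0 => i _; case: ifP.
Qed.

(* Walking down the spine, the subtree at the spine node of depth 8 - j
   contains at least the solvent nodes bought by the last j digits. *)
Lemma spine_solvent j : (j <= 8)%N ->
  (\sum_(8 - j <= t < 8) bit (C %/ 8) (7 - t) * (2 ^ (8 - t) - 1) <=
   solvent_count (solvent p) (2 ^ (8 - j)).-1 j.+1)%N.
Proof.
have [cge _] := spine_injection_feasible.
elim: j => [|j IH] hj; first by rewrite big_geq.
set s := (8 - j.+1)%N; have sS : (8 - j = s.+1)%N by rewrite /s; lia.
rewrite sS in IH; rewrite big_ltn /s; last by lia.
rewrite -/s solvent_countS.
have := expn_gt0 2 s => pow_gt0.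
have -> : ((2 * (2 ^ s).-1).+2 = 2 ^ s.+1)%N by rewrite expnS; lia.
have -> : ((2 * (2 ^ s).-1).+1 = (2 ^ s.+1).-1)%N by rewrite expnS; lia.
have digit : (bit (C %/ 8) (7 - s) * (2 ^ (8 - s) - 1)
              <= solvent_count (solvent p) (2 ^ s.+1) j.+1)%N.
  have : (bit (C %/ 8) (7 - s) < 2)%N by rewrite /bit ltn_mod.
  case hbit: (bit _ _) => [|[|//]] _ //.
  rewrite (full_subtree cge hp) ?tlevel_pow ?spine_node_pays //; try (rewrite /s; lia).
  by rewrite mul1n (_ : 8 - s = j.+1)%N // /s; lia.
have := IH (ltnW hj); lia.
Qed.

Lemma spine_injection_defaults : Ndef (@treeL R) p = (511 - cap (C %/ 8))%N.
Proof.
have [cge _] := spine_injection_feasible.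
apply/anti_leq/andP; split; last first.
  exact: defaults_lower_bound hC spine_injection_feasible hp.
rewrite (defaults_solvent cge hp).
have := spine_solvent (leqnn 8).
rewrite subnn expn0 /= cap_reversed; last by lia.
lia.
Qed.
End OptimalInjection.

Local Open Scope ring_scope.

Lemma rich_root_no_default (R : realFieldType) (C : R) : 2048 <= C ->
  exists c p, feasible C c /\ clearing (@treeL R) (fun _ => 0) c p /\
              Ndef (@treeL R) p = 0%N.
Proof.
move=> hC; pose c i := if i == ord0 :> 'I_1023 then C else 0.
have cge i : 0 <= c i by rewrite /c; case: ifP => _ //; lra.
pose p (i : 'I_1023) := pbar (@treeL R) i.
have ep k : (k < 1023)%N -> vext p k = oblig R k
  by move=> hk; rewrite /vext hk /p pbar_tree inordK.
exists c, p; split; [|split].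
- by split=> //; rewrite (bigD1 ord0) //= big1 ?addr0 // /c => i /negbTE ->.
- apply/clearing_tree => k hk; rewrite ep //; apply/esym/min_l.
  case: k hk => [|k] hk.
    by rewrite /vext /= /c add0r (_ : inord 0 == ord0) //; apply/eqP/val_inj/inordK.
  rewrite /inflow /= ep; last by lia.
  have injected := vext_ge0 cge k.+1.
  case internal: (k.+1 < 511)%N.
    by rewrite (@oblig_child R (k %/ 2) k.+1 internal) ?lerDl //; lia.
  by rewrite {1}/oblig internal addr_ge0 ?divr_ge0 ?oblig_ge0.
- by apply/eqP; rewrite cards_eq0; apply/eqP/setP => i; rewrite !inE ltxx.
Qed.

Theorem mainTheorem3 (R : realFieldType) :
  (forall C : R, 2048 <= C ->
     min_defaults (@treeL R) (fun _ => 0) C 0%N) /\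
  (forall C : nat, (C < 2048)%N ->
     min_defaults (@treeL R) (fun _ => 0) C%:R
       (511 - \sum_(3 <= u < 11) bit C u * (2 ^ (u - 2) - 1))%N).
Proof.
split=> C hC.
  by split; [exact: rich_root_no_default | by []].
rewrite cap_div8 //; split.
- have [p hp] := exists_clearing (spine_injection R C).
  exists (spine_injection R C), p; split; first exact: spine_injection_feasible.
  by split; [exact/clearing_tree | exact: spine_injection_defaults].
- move=> c p hc /clearing_tree hp; exact: defaults_lower_bound hC hc hp.
Qed.
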